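(* Let $E$ be a closed set in $\mathbb{C}$. (1) $E$ satisfies condition $(U)_{1,\alpha}$ for some $\alpha>1$ if and only if there exist positive constants $A,C,r_0,\gamma$ and an increasing function $g_{1,\gamma}:(0,+\infty)\to(0,+\infty)$ with $g_{1,\gamma}(t)=\left(\log\frac{1}{Ct}\right)^{-\gamma}$ for $t\in(0,2r_0)$, such that $$\Lambda_{g_{1,\gamma}}\big(E\cap\overline{B}(a,r)\big)\ge A\,g_{1,\gamma}(2r)\quad\text{for every }a\in E,\ r\in(0,r_0).$$ (2) $E$ satisfies condition $(U)_{2,\beta}$ for some $\beta>0$ if and only if there exist positive constants $A,r_0,\eta$ and an increasing function $g_{2,\eta}:(0,+\infty)\to(0,+\infty)$ with $g_{2,\eta}(t)=\exp\!\left(-\eta\,\dfrac{\log(2/t)}{\log\log(4/t)}\right)$ for $t\in(0,2r_0)$, such that $$\Lambda_{g_{2,\eta}}\big(E\cap\overline{B}(a,r)\big)\ge A\,g_{2,\eta}(2r)\quad\text{for every }a\in E,\ r\in(0,r_0).$$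
   Context: For an increasing function $g:(0,\infty)\to(0,\infty)$ with $\lim_{t\to0}g(t)=0$ and a set $F\subset\mathbb{C}$, the $g$-Hausdorff content is $\Lambda_g(F)=\inf\{\sum_k g(\operatorname{diam}B_k)\}$, the infimum over all countable coverings $\{B_k\}$ of $F$ by closed discs. $\overline{B}(a,r)$ is the closed disc of center $a$ and radius $r$. For an increasing function $h$ on $[0,r_0)$ with $h(r)\le r$, a closed set $K\subset\mathbb{C}$ is $h$-uniformly perfect if $\{z\in\mathbb{C}: h(r)\le|z-a|\le r\}\cap K\neq\emptyset$ for every $a\in K$ and every $r\in(0,r_0)$. Let $h_{1,\alpha}(r)=r^\alpha$ ($\alpha>1$) and $h_{2,\beta}(r)=r(\log\frac1r)^{-\beta}$ ($\beta>0$). A closed set satisfies condition $(U)_{1,\alpha}$ (resp. $(U)_{2,\beta}$) if there exist constants $C>0$ and $r_0>0$ such that it is $Ch_{1,\alpha}$-uniformly perfect (resp. $Ch_{2,\beta}$-uniformly perfect) with that $r_0$. *)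

From Stdlib Require Import Reals.
From Coquelicot Require Import Coquelicot.
Open Scope R_scope.

Definition cdisc (a : C) (r : R) : C -> Prop := fun z => Cmod (z - a) <= r.

(* Only coverings with a finite sum
   contribute a real number to the set; the infimum is taken in Rbar
   (so it is +oo if every covering has divergent sum). *)
Definition covering_sums (g : R -> R) (F : C -> Prop) : R -> Prop :=
  fun x => exists (c : nat -> C) (rad : nat -> R),
    (forall k, 0 < rad k) /\
    (forall z, F z -> exists k, Cmod (z - c k) <= rad k) /\
    ex_series (fun k => g (2 * rad k)) /\
    x = Series (fun k => g (2 * rad k)).

Definition hausdorff_content (g : R -> R) (F : C -> Prop) : Rbar :=
  Glb_Rbar (covering_sums g F).

Definition uniformly_perfect (h : R -> R) (r0 : R) (K : C -> Prop) : Prop :=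
  closed K /\
  (forall r s, 0 <= r -> r <= s -> s < r0 -> h r <= h s) /\
  (forall r, 0 <= r < r0 -> h r <= r) /\
  (forall a, K a -> forall r, 0 < r < r0 ->
     exists z, K z /\ h r <= Cmod (z - a) <= r).

(* h_{1,alpha}(r) = r^alpha,  h_{2,beta}(r) = r (log 1/r)^(-beta); value 0 at r <= 0. *)
Definition h1 (alpha : R) (r : R) : R :=
  if Rle_dec r 0 then 0 else Rpower r alpha.
Definition h2 (beta : R) (r : R) : R :=
  if Rle_dec r 0 then 0 else r * Rpower (ln (1 / r)) (- beta).

Definition condU1 (alpha : R) (E : C -> Prop) : Prop :=
  exists Cc r0, 0 < Cc /\ 0 < r0 /\
    uniformly_perfect (fun r => Cc * h1 alpha r) r0 E.
Definition condU2 (beta : R) (E : C -> Prop) : Prop :=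
  exists Cc r0, 0 < Cc /\ 0 < r0 /\
    uniformly_perfect (fun r => Cc * h2 beta r) r0 E.

Definition gauge (g : R -> R) : Prop :=
  (forall t, 0 < t -> 0 < g t) /\
  (forall s t, 0 < s -> s <= t -> g s <= g t) /\
  filterlim g (at_right 0) (locally 0).

(* Forward directions: uniform perfectness yields, around every point [b] of [E] at scale
   [s], a second point at distance about [h (s/2)]; with radii [r_(n+1) = h (r_n / 2) / 4]
   this gives [2^n] well-separated discs of radius [r_n] in [E /\ B(a, r)].  A covering of
   total g-weight below [B] is impossible: choosing at each generation the half of smaller
   covering mass leads to a point of [E] inside a disc of weight below every [B / 2^n].  The
   gauges are tuned so that [g (2 r_n)] decays like [2^-n]: for [h = r^alpha], [ln (1/r_n)]
   grows like [alpha^n]; for [h = r (ln 1/r)^-beta], [psi (ln (1/r_n))] grows linearly.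
   Backward directions: if the annulus [h r / 2 <= |z - a| <= r] missed [E], then
   [E /\ B(a, r)] would lie in [B(a, h r / 2)], of content at most [g (h r)], which is below
   [A g (2 r)] once [alpha] (resp. [beta]) is large enough. *)

From Stdlib Require Import Reals.
From Coquelicot Require Import Coquelicot.
From Stdlib Require Import Lra Lia ClassicalEpsilon Classical.
Open Scope R_scope.

Lemma Cmod_sub_triangle (x y z : C) : Cmod (x - z) <= Cmod (x - y) + Cmod (y - z).
Proof.
  replace (x - z)%C with ((x - y) + (y - z))%C by (apply injective_projections; simpl; ring).
  apply Cmod_triangle.
Qed.

Lemma Cmod_sub_sym (x y : C) : Cmod (x - y) = Cmod (y - x).
Proof.
  replace (x - y)%C with (- (y - x))%C by (apply injective_projections; simpl; ring).
  apply Cmod_opp.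
Qed.

Lemma Cmod_sub_diag (x : C) : Cmod (x - x) = 0.
Proof.
  replace (x - x)%C with (RtoC 0) by (apply injective_projections; simpl; ring).
  apply Cmod_0.
Qed.

Lemma Cmod_le_Rabs_components (x : C) : Cmod x <= Rabs (fst x) + Rabs (snd x).
Proof.
  destruct x as [a b]; unfold Cmod; simpl.
  rewrite <- (sqrt_square (Rabs a + Rabs b)) by (pose proof (Rabs_pos a); pose proof (Rabs_pos b); lra).
  apply sqrt_le_1_alt.
  assert (a * a = Rabs a * Rabs a) by (rewrite <- Rabs_mult, Rabs_pos_eq; nra).
  assert (b * b = Rabs b * Rabs b) by (rewrite <- Rabs_mult, Rabs_pos_eq; nra).
  pose proof (Rabs_pos a); pose proof (Rabs_pos b). nra.
Qed.

Lemma Rabs_snd_le_Cmod (x : C) : Rabs (snd x) <= Cmod x.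
Proof. eapply Rle_trans; [apply Rmax_r | apply Rmax_Cmod]. Qed.

Lemma Cmod_cauchy_limit (u : nat -> C) :
  (forall eps, 0 < eps -> exists N, forall n m, (N <= n)%nat -> (N <= m)%nat ->
     Cmod (u n - u m) < eps) ->
  exists x, forall eps, 0 < eps -> exists N, forall n, (N <= n)%nat -> Cmod (u n - x) < eps.
Proof.
  intros Hcauchy.
  assert (Hcomp : forall f : C -> R, (forall x y, Rabs (f x - f y) <= Cmod (x - y)) ->
            Cauchy_crit (fun n => f (u n))).
  { intros f Hf eps Heps. destruct (Hcauchy eps Heps) as [N HN].
    exists N. intros n m Hn Hm. unfold Rdist.
    specialize (Hf (u n) (u m)). specialize (HN n m Hn Hm). lra. }
  destruct (Rcomplete.R_complete _ (Hcomp fst (fun x y => re_le_Cmod (x - y))))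
    as [l1 Hl1].
  destruct (Rcomplete.R_complete _ (Hcomp snd (fun x y => Rabs_snd_le_Cmod (x - y))))
    as [l2 Hl2].
  exists (l1, l2). intros eps Heps.
  destruct (Hl1 (eps / 2)) as [N1 HN1]; [lra|].
  destruct (Hl2 (eps / 2)) as [N2 HN2]; [lra|].
  exists (max N1 N2). intros n Hn.
  specialize (HN1 n ltac:(lia)). specialize (HN2 n ltac:(lia)). unfold Rdist in *.
  pose proof (Cmod_le_Rabs_components (u n - (l1, l2))). simpl in *. unfold Rminus in *. lra.
Qed.

Lemma closed_Cmod_adherent (E : C -> Prop) (x : C) :
  closed E -> (forall eps, 0 < eps -> exists z, E z /\ Cmod (z - x) < eps) -> E x.
Proof.
  intros HE Hadh. apply HE. intros [eps Heps].
  destruct (Hadh eps (cond_pos eps)) as [z [Ez Hz]].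
  exact (Heps z (C_NormedModule_mixin_compat1 x z eps Hz) Ez).
Qed.

Lemma pow2_div_small (A eps : R) : 0 < eps -> exists n : nat, A / 2 ^ n < eps.
Proof.
  intros Heps.
  destruct (pow_lt_1_zero (/ 2) ltac:(rewrite Rabs_pos_eq; lra) (eps / (Rabs A + 1)))
    as [N HN].
  { apply Rdiv_lt_0_compat; [lra | pose proof (Rabs_pos A); lra]. }
  exists N. specialize (HN N (le_n N)).
  rewrite Rabs_pos_eq, pow_inv in HN by (apply pow_le; lra).
  assert (Hq : 0 < / 2 ^ N) by (apply Rinv_0_lt_compat, pow_lt; lra).
  assert (Hle : A / 2 ^ N <= Rabs A * / 2 ^ N) by (apply Rmult_le_compat_r; [lra | apply Rle_abs]).
  apply (Rmult_lt_compat_l (Rabs A + 1)) in HN; [| pose proof (Rabs_pos A); lra].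
  replace ((Rabs A + 1) * (eps / (Rabs A + 1))) with eps in HN
    by (field; pose proof (Rabs_pos A); lra).
  nra.
Qed.

Lemma halving_le_pow2 (rs : nat -> R) :
  (forall n, rs (S n) <= rs n / 2) -> forall n, rs n <= rs 0%nat / 2 ^ n.
Proof.
  intros Hhalf. induction n as [|n IH]; [simpl; lra |].
  specialize (Hhalf n). simpl.
  replace (rs 0%nat / (2 * 2 ^ n)) with (rs 0%nat / 2 ^ n / 2) by (field; apply pow_nonzero; lra).
  lra.
Qed.

Lemma halving_small (rs : nat -> R) :
  (forall n, rs (S n) <= rs n / 2) -> forall eps, 0 < eps -> exists n, rs n < eps.
Proof.
  intros Hhalf eps Heps. destruct (pow2_div_small (rs 0%nat) eps Heps) as [n Hn].
  exists n. pose proof (halving_le_pow2 rs Hhalf n). lra.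
Qed.

Lemma nested_discs_limit (u : nat -> C) (rs : nat -> R) :
  (forall n, 0 < rs n) -> (forall n, rs (S n) <= rs n / 2) ->
  (forall n, Cmod (u (S n) - u n) + rs (S n) <= rs n) ->
  exists x, forall n, Cmod (x - u n) <= rs n.
Proof.
  intros Hpos Hhalf Hstep.
  assert (Hnest : forall n m, Cmod (u (n + m)%nat - u n) <= rs n - rs (n + m)%nat).
  { intros n m. induction m as [|m IH].
    - rewrite Nat.add_0_r, Cmod_sub_diag. lra.
    - rewrite Nat.add_succ_r.
      pose proof (Cmod_sub_triangle (u (S (n + m))) (u (n + m)%nat) (u n)).
      specialize (Hstep (n + m)%nat). lra. }
  assert (Hanti : forall n m, (n <= m)%nat -> rs m <= rs n).
  { intros n m Hnm. replace m with (n + (m - n))%nat by lia.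
    pose proof (Hnest n (m - n)%nat). pose proof (Cmod_ge_0 (u (n + (m - n))%nat - u n)). lra. }
  assert (Hclose : forall N n, (N <= n)%nat -> Cmod (u n - u N) <= rs N).
  { intros N n Hn. replace n with (N + (n - N))%nat by lia.
    pose proof (Hnest N (n - N)%nat). pose proof (Hpos (N + (n - N))%nat). lra. }
  destruct (Cmod_cauchy_limit u) as [x Hx].
  { intros eps Heps. destruct (halving_small rs Hhalf (eps / 2)) as [N HN]; [lra |].
    exists N. intros n m Hn Hm.
    pose proof (Cmod_sub_triangle (u n) (u N) (u m)).
    rewrite (Cmod_sub_sym (u N) (u m)) in H.
    pose proof (Hclose N n Hn). pose proof (Hclose N m Hm). lra. }
  exists x. intro n. apply le_epsilon. intros eps Heps.
  destruct (Hx eps Heps) as [N HN].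
  pose proof (HN (n + N)%nat ltac:(lia)).
  pose proof (Cmod_sub_triangle x (u (n + N)%nat) (u n)).
  rewrite (Cmod_sub_sym x (u (n + N)%nat)) in H0.
  pose proof (Hnest n N). pose proof (Hpos (n + N)%nat). lra.
Qed.

Lemma dependent_choice_sequence {T : Type} (P : nat -> T -> Prop) (Q : nat -> T -> T -> Prop)
  (x0 : T) :
  P 0%nat x0 -> (forall n x, P n x -> exists y, P (S n) y /\ Q n x y) ->
  exists u : nat -> T, u 0%nat = x0 /\ forall n, P n (u n) /\ Q n (u n) (u (S n)).
Proof.
  intros H0 Hstep.
  set (next := fun n x => epsilon (inhabits x) (fun y => P (S n) y /\ Q n x y)).
  set (u := fun n => nat_rect (fun _ => T) x0 next n).
  assert (Hu : forall n, P n (u n)).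
  { induction n as [|n IH]; [exact H0 |].
    exact (proj1 (epsilon_spec (inhabits (u n)) _ (Hstep n (u n) IH))). }
  exists u. split; [reflexivity |]. intro n. split; [apply Hu |].
  exact (proj2 (epsilon_spec (inhabits (u n)) _ (Hstep n (u n) (Hu n)))).
Qed.

Lemma Series_ge_0 (u : nat -> R) : (forall k, 0 <= u k) -> ex_series u -> 0 <= Series u.
Proof.
  intros Hu Hex.
  assert (Hzero : Series (fun _ => 0) = 0).
  { rewrite (Series_ext _ (fun k => 0 * 0)) by (intro; ring).
    rewrite Series_scal_l. ring. }
  rewrite <- Hzero. apply Series_le; [intro k; specialize (Hu k); lra | exact Hex].
Qed.

Lemma term_le_Series (u : nat -> R) (j : nat) :
  (forall k, 0 <= u k) -> ex_series u -> u j <= Series u.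
Proof.
  intros Hu Hex.
  rewrite (Series_incr_n u (S j)) by (lia || exact Hex). simpl Init.Nat.pred.
  assert (0 <= Series (fun k => u (S j + k)%nat)).
  { apply Series_ge_0; [intro; apply Hu | apply (ex_series_incr_n u (S j)), Hex]. }
  assert (u j <= sum_f_R0 u j).
  { destruct j as [|j]; simpl; [lra |].
    pose proof (cond_pos_sum u j Hu). lra. }
  lra.
Qed.

Section NearWeights.

Variables (g : R -> R) (c : nat -> C) (rad : nat -> R).
Hypothesis g_pos : forall t, 0 < t -> 0 < g t.
Hypothesis rad_pos : forall k, 0 < rad k.
Hypothesis weights_summable : ex_series (fun k => g (2 * rad k)).

Definition near_weight (b : C) (s : R) (k : nat) : R :=
  if Rle_dec (Cmod (b - c k)) (rad k + s) then g (2 * rad k) else 0.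

Lemma near_weight_bounds b s k : 0 <= near_weight b s k <= g (2 * rad k).
Proof.
  pose proof (g_pos (2 * rad k) ltac:(pose proof (rad_pos k); lra)).
  unfold near_weight. destruct Rle_dec; lra.
Qed.

Lemma ex_series_near_weight b s : ex_series (near_weight b s).
Proof.
  apply (@ex_series_le R_AbsRing R_CompleteNormedModule _ (fun k => g (2 * rad k)));
    [| exact weights_summable].
  intro k. change (Rabs (near_weight b s k) <= g (2 * rad k)).
  pose proof (near_weight_bounds b s k). rewrite Rabs_pos_eq; lra.
Qed.

Lemma weight_le_near_mass b s k :
  Cmod (b - c k) <= rad k + s -> g (2 * rad k) <= Series (near_weight b s).
Proof.
  intro Hk.
  replace (g (2 * rad k)) with (near_weight b s k) by (unfold near_weight; destruct Rle_dec; tauto).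
  apply term_le_Series; [intro; apply near_weight_bounds | apply ex_series_near_weight].
Qed.

Lemma near_mass_le_Series b s : Series (near_weight b s) <= Series (fun k => g (2 * rad k)).
Proof. apply Series_le; [apply near_weight_bounds | exact weights_summable]. Qed.

(* No disc meeting B(b,s') can meet both B(b,s) and B(z,s): such a disc would be heavier
   than the whole mass around b.  Hence one of the two sub-masses is at most half. *)
Lemma near_mass_halving (b z : C) (s s' t M : R) :
  (forall u v, 0 < u -> u <= v -> g u <= g v) -> 0 < t ->
  2 * s + t <= Cmod (z - b) -> Cmod (z - b) + s <= s' ->
  2 * M <= g t -> Series (near_weight b s') < 2 * M ->
  Series (near_weight b s) < M \/ Series (near_weight z s) < M.
Proof.
  intros g_mon Ht Hfar Hin HgM Hmass.
  assert (Hss' : s <= s') by (pose proof (Cmod_ge_0 (z - b)); lra).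
  assert (Hdisjoint : forall k, Cmod (b - c k) <= rad k + s -> Cmod (z - c k) <= rad k + s -> False).
  { intros k Hb Hz.
    pose proof (Cmod_sub_triangle z (c k) b). rewrite (Cmod_sub_sym (c k) b) in H.
    assert (g t <= g (2 * rad k)) by (apply g_mon; lra).
    pose proof (weight_le_near_mass b s' k ltac:(lra)). lra. }
  assert (Hsum : Series (near_weight b s) + Series (near_weight z s) <= Series (near_weight b s')).
  { rewrite <- Series_plus by apply ex_series_near_weight.
    apply Series_le; [| apply ex_series_near_weight].
    intro k. pose proof (near_weight_bounds b s k). pose proof (near_weight_bounds z s k).
    split; [lra |]. unfold near_weight.
    pose proof (Cmod_sub_triangle b z (c k)). rewrite (Cmod_sub_sym b z) in H1.
    pose proof (Hdisjoint k). pose proof (g_pos (2 * rad k) ltac:(pose proof (rad_pos k); lra)).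
    repeat destruct Rle_dec; try tauto; lra. }
  destruct (Rlt_dec (Series (near_weight b s)) M); [left | right]; lra.
Qed.

End NearWeights.

Section SplittingLowerBound.

Variables (E : C -> Prop) (g : R -> R) (rs ts : nat -> R) (B : R).
Hypothesis E_closed : closed E.
Hypothesis g_pos : forall t, 0 < t -> 0 < g t.
Hypothesis g_mon : forall s t, 0 < s -> s <= t -> g s <= g t.
Hypothesis rs_pos : forall n, 0 < rs n.
Hypothesis ts_pos : forall n, 0 < ts n.
Hypothesis rs_half : forall n, rs (S n) <= rs n / 2.
Hypothesis splitting : forall n b, E b -> exists z, E z /\
  2 * rs (S n) + ts n <= Cmod (z - b) /\ Cmod (z - b) + rs (S n) <= rs n.
Hypothesis B_le_gauge : forall n, B / 2 ^ n <= g (ts n).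

Lemma light_points_sequence (c : nat -> C) (rad : nat -> R) (a : C) :
  (forall k, 0 < rad k) -> ex_series (fun k => g (2 * rad k)) ->
  E a -> Series (fun k => g (2 * rad k)) < B ->
  exists u : nat -> C, u 0%nat = a /\ forall n,
    (E (u n) /\ Series (near_weight g c rad (u n) (rs n)) < B / 2 ^ n) /\
    Cmod (u (S n) - u n) + rs (S n) <= rs n.
Proof.
  intros rad_pos Hsum Ea Hlight.
  apply (dependent_choice_sequence
           (fun n b => E b /\ Series (near_weight g c rad b (rs n)) < B / 2 ^ n)
           (fun n b b' => Cmod (b' - b) + rs (S n) <= rs n)).
  - split; [exact Ea |]. rewrite pow_O, Rdiv_1_r.
    eapply Rle_lt_trans; [apply near_mass_le_Series |]; auto.
  - intros n b [Eb Hb]. destruct (splitting n b Eb) as [z [Ez [Hfar Hin]]].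
    assert (Hhalf : 2 * (B / 2 ^ S n) = B / 2 ^ n) by (simpl; field; apply pow_nonzero; lra).
    destruct (near_mass_halving g c rad g_pos rad_pos Hsum b z (rs (S n)) (rs n) (ts n)
                (B / 2 ^ S n) g_mon (ts_pos n) Hfar Hin ltac:(rewrite Hhalf; apply B_le_gauge)
                ltac:(rewrite Hhalf; exact Hb)) as [Hl | Hr].
    + exists b. rewrite Cmod_sub_diag. split; [split; auto |].
      pose proof (rs_half n); pose proof (rs_pos n); lra.
    + exists z. split; [split |]; auto.
Qed.

(* Were the covering lighter than [B], the limit [x] of the light points would lie in a
   disc whose weight is below every [B / 2^n]. *)
Lemma covering_sum_ge (c : nat -> C) (rad : nat -> R) (a : C) :
  (forall k, 0 < rad k) -> ex_series (fun k => g (2 * rad k)) -> E a ->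
  (forall z, E z /\ cdisc a (rs 0%nat) z -> exists k, Cmod (z - c k) <= rad k) ->
  B <= Series (fun k => g (2 * rad k)).
Proof.
  intros rad_pos Hsum Ea Hcov. apply Rnot_lt_le. intro Hlight.
  destruct (light_points_sequence c rad a rad_pos Hsum Ea Hlight) as [u [u0 Hu]].
  destruct (nested_discs_limit u rs rs_pos rs_half (fun n => proj2 (Hu n))) as [x Hx].
  assert (Ex : E x).
  { apply (closed_Cmod_adherent E x E_closed). intros eps Heps.
    destruct (halving_small rs rs_half eps Heps) as [N HN].
    exists (u N). split; [apply (proj1 (Hu N)) |].
    rewrite Cmod_sub_sym. pose proof (Hx N). lra. }
  destruct (Hcov x) as [k Hk].
  { split; [exact Ex |]. unfold cdisc. rewrite <- u0. apply Hx. }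
  assert (Hsmall : forall n, g (2 * rad k) < B / 2 ^ n).
  { intro n. destruct (proj1 (Hu n)) as [_ Hmass].
    eapply Rle_lt_trans; [| exact Hmass].
    apply weight_le_near_mass; auto.
    pose proof (Cmod_sub_triangle (u n) x (c k)). rewrite (Cmod_sub_sym (u n) x) in H.
    pose proof (Hx n). lra. }
  destruct (pow2_div_small B (g (2 * rad k)) (g_pos (2 * rad k) ltac:(pose proof (rad_pos k); lra)))
    as [n Hn].
  pose proof (Hsmall n). lra.
Qed.

Lemma hausdorff_content_ge_of_splitting (a : C) :
  E a -> Rbar_le B (hausdorff_content g (fun z => E z /\ cdisc a (rs 0%nat) z)).
Proof.
  intro Ea. apply (proj2 (Glb_Rbar_correct _)).
  intros x [c [rad [rad_pos [Hcov [Hsum ->]]]]].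
  exact (covering_sum_ge c rad a rad_pos Hsum Ea Hcov).
Qed.

End SplittingLowerBound.

(* A point of [E] in the annulus [h (s/2) <= |z - b| <= s/2] is at distance at least
   [4 s'] from [b], where [s'] is the next radius: the discs of radius [s'] around [b]
   and [z] are then separated by a gap of width [2 s']. *)
Fixpoint perfect_radii (h : R -> R) (r : R) (n : nat) : R :=
  match n with
  | O => r
  | S n => h (perfect_radii h r n / 2) / 4
  end.

Lemma perfect_radii_bounds (h : R -> R) (R0 r : R) :
  (forall s, 0 <= s < R0 -> h s <= s) -> (forall s, 0 < s < R0 -> 0 < h s) -> 0 < r < R0 ->
  forall n, 0 < perfect_radii h r n <= r /\ perfect_radii h r (S n) <= perfect_radii h r n / 8.
Proof.
  intros h_le h_pos Hr.
  assert (Hpos : forall n, 0 < perfect_radii h r n <= r).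
  { induction n as [|n IH]; simpl; [lra |].
    pose proof (h_le (perfect_radii h r n / 2) ltac:(lra)).
    pose proof (h_pos (perfect_radii h r n / 2) ltac:(lra)). lra. }
  intro n. split; [apply Hpos |]. simpl.
  pose proof (Hpos n). pose proof (h_le (perfect_radii h r n / 2) ltac:(lra)). lra.
Qed.

Lemma uniformly_perfect_content_ge (E : C -> Prop) (h g : R -> R) (R0 B r : R) (a : C) :
  uniformly_perfect h R0 E -> (forall s, 0 < s < R0 -> 0 < h s) ->
  (forall t, 0 < t -> 0 < g t) -> (forall s t, 0 < s -> s <= t -> g s <= g t) ->
  E a -> 0 < r < R0 ->
  (forall n, B / 2 ^ n <= g (2 * perfect_radii h r (S n))) ->
  Rbar_le B (hausdorff_content g (fun z => E z /\ cdisc a r z)).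
Proof.
  intros [HE [_ [h_le Hann]]] h_pos g_pos g_mon Ea Hr HB.
  pose proof (perfect_radii_bounds h R0 r h_le h_pos Hr) as Hrs.
  apply (hausdorff_content_ge_of_splitting E g (perfect_radii h r)
           (fun n => 2 * perfect_radii h r (S n))); auto.
  - intro n. apply Hrs.
  - intro n. pose proof (Hrs (S n)). lra.
  - intro n. pose proof (Hrs n). lra.
  - intros n b Eb. destruct (Hrs n) as [Hn _].
    destruct (Hann b Eb (perfect_radii h r n / 2) ltac:(lra)) as [z [Ez Hz]].
    exists z. split; [exact Ez |]. simpl. pose proof (h_le (perfect_radii h r n / 2) ltac:(lra)). lra.
Qed.

Lemma gauge_small (g : R -> R) : gauge g -> forall eps, 0 < eps -> exists t, 0 < t /\ g t < eps.
Proof.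
  intros [_ [_ Hlim]] eps Heps.
  destruct (proj1 (filterlim_locally _ _) Hlim (mkposreal eps Heps)) as [d Hd].
  pose proof (cond_pos d).
  exists (d / 2). split; [lra |].
  assert (Hball : ball 0 d (d / 2)).
  { change (Rabs (d / 2 - 0) < d). rewrite Rminus_0_r, Rabs_pos_eq; lra. }
  specialize (Hd (d / 2) Hball ltac:(lra)).
  change (Rabs (g (d / 2) - 0) < eps) in Hd.
  rewrite Rminus_0_r in Hd. pose proof (Rle_abs (g (d / 2))). lra.
Qed.

Lemma is_series_half_geom (q : R) : is_series (fun k => q * (/ 2) ^ k) (2 * q).
Proof.
  assert (H := is_series_geom (/ 2) ltac:(rewrite Rabs_pos_eq; lra)).
  apply (@is_series_scal_l R_AbsRing R_NormedModule q) in H.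
  replace (2 * q) with (scal q (/ (1 - / 2))); [exact H |].
  change (q * / (1 - / 2) = 2 * q). field.
Qed.

(* Cover [F] by [B(a, rho)] together with discs of total weight at most [eps]. *)
Lemma hausdorff_content_le_disc (g : R -> R) (F : C -> Prop) (a : C) (rho eps : R) :
  gauge g -> 0 < rho -> 0 < eps -> (forall z, F z -> Cmod (z - a) <= rho) ->
  Rbar_le (hausdorff_content g F) (g (2 * rho) + eps).
Proof.
  intros Hg Hrho Heps HF.
  set (tail := fun k : nat =>
    epsilon (inhabits 1) (fun t => 0 < t /\ g (2 * t) < eps / 2 * (/ 2) ^ k)).
  assert (Htail : forall k, 0 < tail k /\ g (2 * tail k) < eps / 2 * (/ 2) ^ k).
  { intro k. apply epsilon_spec.
    destruct (gauge_small g Hg (eps / 2 * (/ 2) ^ k)) as [t [Ht Hgt]].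
    { apply Rmult_lt_0_compat; [lra | apply pow_lt; lra]. }
    exists (t / 2). split; [lra |]. replace (2 * (t / 2)) with t by field. exact Hgt. }
  set (rad := fun k : nat => match k with O => rho | S k => tail k end).
  destruct Hg as [g_pos _].
  assert (Hgeom : is_series (fun k => eps / 2 * (/ 2) ^ k) eps).
  { pose proof (is_series_half_geom (eps / 2)) as H.
    replace (2 * (eps / 2)) with eps in H by field. exact H. }
  assert (Hdom : forall k, 0 <= g (2 * rad (S k)) <= eps / 2 * (/ 2) ^ k).
  { intro k. simpl. destruct (Htail k) as [Ht Hgt].
    pose proof (g_pos (2 * tail k) ltac:(lra)). lra. }
  assert (Hex_tail : ex_series (fun k => g (2 * rad (S k)))).
  { apply (@ex_series_le R_AbsRing R_CompleteNormedModule _ (fun k => eps / 2 * (/ 2) ^ k)).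
    - intro k. change (Rabs (g (2 * rad (S k))) <= eps / 2 * (/ 2) ^ k).
      pose proof (Hdom k). rewrite Rabs_pos_eq; lra.
    - exists eps. exact Hgeom. }
  assert (Hex : ex_series (fun k => g (2 * rad k))) by (apply ex_series_incr_1; exact Hex_tail).
  apply (Rbar_le_trans _ (Finite (Series (fun k => g (2 * rad k))))).
  - apply (proj1 (Glb_Rbar_correct _)).
    exists (fun _ => a), rad. repeat split; auto.
    + intros [|k]; simpl; [lra | apply Htail].
    + intros z Hz. exists 0%nat. apply HF, Hz.
  - simpl. rewrite Series_incr_1 by exact Hex.
    pose proof (Series_le _ _ Hdom (ex_intro _ eps Hgeom)) as Hle.
    rewrite (is_series_unique _ _ Hgeom) in Hle. simpl in *. lra.
Qed.

Lemma content_ge_le_gauge (g : R -> R) (F : C -> Prop) (a : C) (rho x : R) :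
  gauge g -> 0 < rho -> (forall z, F z -> Cmod (z - a) <= rho) ->
  Rbar_le x (hausdorff_content g F) -> x <= g (2 * rho).
Proof.
  intros Hg Hrho HF Hx. apply le_epsilon. intros eps Heps.
  exact (Rbar_le_trans _ _ (Finite _) Hx (hausdorff_content_le_disc g F a rho eps Hg Hrho Heps HF)).
Qed.

Lemma gauge_truncate (F : R -> R) (T : R) :
  0 < T ->
  (forall t, 0 < t <= T -> 0 < F t) ->
  (forall s t, 0 < s -> s <= t -> t <= T -> F s <= F t) ->
  (forall eps, 0 < eps -> exists t, 0 < t <= T /\ F t < eps) ->
  gauge (fun t => F (Rmin t T)).
Proof.
  intros HT F_pos F_mon F_small. split; [| split].
  - intros t Ht. apply F_pos. split; [apply Rmin_glb_lt; auto | apply Rmin_r].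
  - intros s t Hs Hst. apply F_mon.
    + apply Rmin_glb_lt; auto.
    + apply Rle_min_compat_r; auto.
    + apply Rmin_r.
  - apply filterlim_locally. intros eps.
    destruct (F_small eps (cond_pos eps)) as [t [Ht Hft]].
    exists (mkposreal t (proj1 Ht)). intros y Hy Hy0. simpl in Hy0.
    change (Rabs (y - 0) < t) in Hy. rewrite Rminus_0_r, Rabs_pos_eq in Hy by lra.
    change (Rabs (F (Rmin y T) - 0) < eps).
    rewrite Rmin_left, Rminus_0_r by lra.
    pose proof (F_pos y ltac:(lra)). pose proof (F_mon y t ltac:(lra) ltac:(lra) ltac:(lra)).
    rewrite Rabs_pos_eq; lra.
Qed.

Lemma uniformly_perfect_of_content_ge (E : C -> Prop) (h g : R -> R) (R0 A : R) :
  closed E -> gauge g ->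
  (forall r s, 0 <= r -> r <= s -> s < R0 -> h r <= h s) ->
  (forall r, 0 <= r < R0 -> h r <= r) ->
  (forall r, 0 < r < R0 -> 0 < h r) ->
  (forall r, 0 < r < R0 -> g (h r) < A * g (2 * r)) ->
  (forall a r, E a -> 0 < r < R0 ->
     Rbar_le (A * g (2 * r)) (hausdorff_content g (fun z => E z /\ cdisc a r z))) ->
  uniformly_perfect (fun r => 1 / 2 * h r) R0 E.
Proof.
  intros HE Hg h_mon h_le h_pos Hdrop Hlb.
  split; [exact HE | split; [| split]].
  - intros r s Hr Hrs Hs. pose proof (h_mon r s Hr Hrs Hs). lra.
  - intros r Hr. pose proof (h_le r Hr). destruct (Rle_lt_dec 0 (h r)); lra.
  - intros a Ea r Hr. apply NNPP. intro Hgap.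
    assert (Hinner : forall z, E z /\ cdisc a r z -> Cmod (z - a) <= h r / 2).
    { intros z [Ez Hz]. apply Rnot_lt_le. intro Hfar.
      apply Hgap. exists z. unfold cdisc in Hz. split; [exact Ez | lra]. }
    pose proof (content_ge_le_gauge g _ a (h r / 2) _ Hg ltac:(pose proof (h_pos r Hr); lra)
                  Hinner (Hlb a r Ea Hr)) as Hle.
    replace (2 * (h r / 2)) with (h r) in Hle by field.
    pose proof (Hdrop r Hr). lra.
Qed.

Lemma Rmin3_pos (a b c : R) :
  0 < a -> 0 < b -> 0 < c ->
  0 < Rmin (Rmin a b) c /\ Rmin (Rmin a b) c <= a /\ Rmin (Rmin a b) c <= b /\
  Rmin (Rmin a b) c <= c.
Proof.
  intros Ha Hb Hc.
  pose proof (Rmin_l (Rmin a b) c). pose proof (Rmin_r (Rmin a b) c).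
  pose proof (Rmin_l a b). pose proof (Rmin_r a b).
  repeat split; try lra. apply Rmin_glb_lt; [apply Rmin_glb_lt |]; lra.
Qed.

Lemma exp_le_compat (x y : R) : x <= y -> exp x <= exp y.
Proof. intros [H | ->]; [left; apply exp_increasing, H | lra]. Qed.

Lemma ln_le_sub_1 (x : R) : 0 < x -> ln x <= x - 1.
Proof. intro Hx. pose proof (exp_ineq1_le (ln x)). rewrite exp_ln in H; lra. Qed.

Lemma ln_2_pos : 0 < ln 2.
Proof. pose proof ln_lt_2. lra. Qed.

Lemma ln_2_lt_1 : ln 2 < 1.
Proof. rewrite <- (ln_exp 1). apply ln_increasing; [lra |]. pose proof (exp_ineq1 1). lra. Qed.

Lemma ln_lt_0 (t : R) : 0 < t < 1 -> ln t < 0.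
Proof. intro Ht. rewrite <- ln_1. apply ln_increasing; lra. Qed.

Lemma lt_opp_ln (M r : R) : 0 < r < exp (- M) -> M < - ln r.
Proof. intro Hr. assert (ln r < ln (exp (- M))) by (apply ln_increasing; lra). rewrite ln_exp in H. lra. Qed.

Lemma exp_div_pow2 (c : R) (n : nat) : exp (- c) / 2 / 2 ^ n = exp (- (c + INR (S n) * ln 2)).
Proof.
  rewrite <- (Rpower_pow n 2) by lra. unfold Rpower. rewrite S_INR.
  replace (- (c + (INR n + 1) * ln 2)) with (- c + - (INR n * ln 2) + - ln 2) by ring.
  rewrite !exp_plus, !exp_Ropp, exp_ln by lra. field.
  split; apply Rgt_not_eq, exp_pos.
Qed.

Lemma Rpower_ln_inv (gamma t : R) :
  0 < t < 1 -> Rpower (ln (1 / t)) (- gamma) = exp (- gamma * ln (- ln t)).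
Proof. intro Ht. unfold Rpower, Rdiv. rewrite Rmult_1_l, ln_Rinv by lra. reflexivity. Qed.

Lemma log_gauge (gamma T : R) :
  0 < gamma -> 0 < T < 1 -> gauge (fun t => Rpower (ln (1 / Rmin t T)) (- gamma)).
Proof.
  intros Hgamma HT.
  apply (gauge_truncate (fun t => Rpower (ln (1 / t)) (- gamma))); [lra | | |].
  - intros t Ht. apply exp_pos.
  - intros s t Hs Hst HtT. rewrite !Rpower_ln_inv by lra. apply exp_le_compat.
    pose proof (ln_lt_0 t ltac:(lra)).
    assert (ln s <= ln t) by (apply ln_le; lra).
    assert (ln (- ln t) <= ln (- ln s)) by (apply ln_le; lra).
    nra.
  - intros eps Heps.
    set (M := Rmax (ln (- ln T)) (- ln eps / gamma) + 1).
    pose proof (ln_lt_0 T HT).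
    assert (HM1 : ln (- ln T) < M) by (unfold M; pose proof (Rmax_l (ln (- ln T)) (- ln eps / gamma)); lra).
    assert (HM2 : - ln eps / gamma < M) by (unfold M; pose proof (Rmax_r (ln (- ln T)) (- ln eps / gamma)); lra).
    exists (exp (- exp M)).
    assert (HT' : - ln T < exp M) by (rewrite <- (exp_ln (- ln T)) by lra; apply exp_increasing, HM1).
    assert (Hsmall : exp (- exp M) < T) by (rewrite <- (exp_ln T) by lra; apply exp_increasing; lra).
    split; [split; [apply exp_pos | lra] |].
    rewrite Rpower_ln_inv by (split; [apply exp_pos | lra]).
    rewrite ln_exp, Ropp_involutive, ln_exp, <- (exp_ln eps) by exact Heps.
    apply exp_increasing.
    apply (Rmult_lt_compat_l gamma) in HM2; [| exact Hgamma].
    replace (gamma * (- ln eps / gamma)) with (- ln eps) in HM2 by (field; lra). lra.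
Qed.

Lemma h1_pos_eq (alpha r : R) : 0 < r -> h1 alpha r = Rpower r alpha.
Proof. intro Hr. unfold h1. destruct Rle_dec; [lra | reflexivity]. Qed.

Lemma power_step_ln (c alpha x : R) :
  0 < c -> 0 < x ->
  - ln (c * h1 alpha (x / 2) / 4) = alpha * (- ln x) + (ln 4 - ln c + alpha * ln 2).
Proof.
  intros Hc Hx. rewrite h1_pos_eq by lra. unfold Rpower.
  pose proof (exp_pos (alpha * ln (x / 2))).
  rewrite ln_div, ln_mult, ln_exp, ln_div by (apply Rmult_lt_0_compat || lra || idtac; lra).
  ring.
Qed.

(* [x (n+1) + K <= alpha (x n + K)], so [ln (x n + K)] grows by at most [ln alpha] per step. *)
Lemma affine_growth_ln (alpha kappa K : R) (x : nat -> R) :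
  1 < alpha -> 0 <= K -> kappa <= (alpha - 1) * K -> (forall n, 0 < x n) ->
  (forall n, x (S n) = alpha * x n + kappa) ->
  forall n, ln (x n + K) <= INR n * ln alpha + ln (x 0%nat + K).
Proof.
  intros Halpha HK Hkappa Hpos Hrec. induction n as [|n IH]; [simpl; lra |].
  pose proof (Hpos n). pose proof (Hpos (S n)).
  assert (Hle : x (S n) + K <= alpha * (x n + K)) by (rewrite Hrec; nra).
  apply ln_le in Hle; [| lra]. rewrite ln_mult, S_INR in * by lra. lra.
Qed.

Lemma power_radii_gauge_bound (c alpha K r : R) (n : nat) :
  1 < alpha -> 0 < c -> 0 <= K -> ln 4 - ln c + alpha * ln 2 <= (alpha - 1) * K ->
  (forall m, 0 < perfect_radii (fun s => c * h1 alpha s) r m < 1 / 4) ->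
  exp (- (ln 2 / ln alpha * ln (- ln r + K))) / 2 / 2 ^ n
    <= Rpower (ln (1 / (2 * perfect_radii (fun s => c * h1 alpha s) r (S n)))) (- (ln 2 / ln alpha)).
Proof.
  intros Halpha Hc HK Hkappa Hrs.
  set (rs := perfect_radii (fun s => c * h1 alpha s) r) in *.
  set (x := fun m => - ln (rs m)).
  assert (Hx : forall m, 0 < x m) by (intro m; unfold x; pose proof (ln_lt_0 (rs m) ltac:(pose proof (Hrs m); lra)); lra).
  assert (Hgrowth := affine_growth_ln alpha _ K x Halpha HK Hkappa Hx
                       (fun m => power_step_ln c alpha (rs m) Hc (proj1 (Hrs m))) (S n)).
  assert (Hla : 0 < ln alpha) by (rewrite <- ln_1; apply ln_increasing; lra).
  pose proof ln_2_pos. pose proof (Hrs (S n)).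
  rewrite exp_div_pow2, Rpower_ln_inv by (split; lra). apply exp_le_compat.
  assert (Hts : - ln (2 * rs (S n)) = x (S n) - ln 2) by (unfold x; rewrite ln_mult by lra; ring).
  assert (Hlog : ln (- ln (2 * rs (S n))) <= ln (x (S n) + K)).
  { rewrite Hts. pose proof (ln_lt_0 (2 * rs (S n)) ltac:(lra)). apply ln_le; lra. }
  assert (Hgamma : 0 < ln 2 / ln alpha) by (apply Rdiv_lt_0_compat; lra).
  apply (Rmult_le_compat_l (ln 2 / ln alpha)) in Hlog; [| lra].
  apply (Rmult_le_compat_l (ln 2 / ln alpha)) in Hgrowth; [| lra].
  replace (ln 2 / ln alpha * (INR (S n) * ln alpha + ln (x 0%nat + K)))
    with (INR (S n) * ln 2 + ln 2 / ln alpha * ln (x 0%nat + K)) in Hgrowth by (field; lra).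
  unfold x in Hgrowth, Hlog. change (rs 0%nat) with r in Hgrowth. lra.
Qed.

Lemma log_gauge_initial_bound (gamma K r : R) :
  0 < gamma -> 0 <= K -> 0 < r -> K + 2 * ln 2 <= - ln r ->
  exp (- gamma * ln 2) / 2 * exp (- gamma * ln (- ln (2 * r)))
    <= exp (- (gamma * ln (- ln r + K))) / 2.
Proof.
  intros Hgamma HK Hr Hlarge. pose proof ln_2_pos.
  rewrite <- Rmult_div_swap, <- exp_plus. apply Rmult_le_compat_r; [lra |].
  apply exp_le_compat. rewrite ln_mult by lra.
  assert (ln (- ln r + K) <= ln 2 + ln (- (ln 2 + ln r))).
  { rewrite <- ln_mult by lra. apply ln_le; lra. }
  nra.
Qed.

Lemma power_perfect_content_ge_at (E : C -> Prop) (g : R -> R) (alpha c R0 K r : R) (a : C) :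
  1 < alpha -> 0 < c -> uniformly_perfect (fun s => c * h1 alpha s) R0 E ->
  0 <= K -> ln 4 - ln c + alpha * ln 2 <= (alpha - 1) * K ->
  gauge g -> (forall t, 0 < t <= 2 * r -> g t = Rpower (ln (1 / t)) (- (ln 2 / ln alpha))) ->
  E a -> 0 < r < R0 -> r < 1 / 4 -> r < exp (- (K + 2 * ln 2)) ->
  Rbar_le (exp (- (ln 2 / ln alpha) * ln 2) / 2 * g (2 * r))
          (hausdorff_content g (fun z => E z /\ cdisc a r z)).
Proof.
  intros Halpha Hc HUP HK Hkappa Hg Hform Ea Hr Hr4 HrK.
  pose proof ln_2_pos.
  assert (Hgamma : 0 < ln 2 / ln alpha).
  { apply Rdiv_lt_0_compat; [lra |]. rewrite <- ln_1. apply ln_increasing; lra. }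
  set (h := fun s => c * h1 alpha s).
  assert (h_pos : forall s, 0 < s < R0 -> 0 < h s).
  { intros s Hs. unfold h. rewrite h1_pos_eq by lra. pose proof (exp_pos (alpha * ln s)).
    unfold Rpower. nra. }
  pose proof HUP as [_ [_ [h_le _]]].
  pose proof (perfect_radii_bounds h R0 r h_le h_pos Hr) as Hrs.
  apply (Rbar_le_trans _ (Finite (exp (- (ln 2 / ln alpha * ln (- ln r + K))) / 2))).
  - simpl. rewrite Hform, Rpower_ln_inv by lra.
    apply log_gauge_initial_bound; try lra.
    pose proof (lt_opp_ln (K + 2 * ln 2) r ltac:(lra)). lra.
  - apply (uniformly_perfect_content_ge E h g R0 _ r a HUP h_pos); try apply Hg; auto.
    intro n. pose proof (Hrs (S n)). rewrite Hform by lra.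
    apply power_radii_gauge_bound; auto.
    intro m. change (0 < perfect_radii h r m < 1 / 4). pose proof (Hrs m). split; lra.
Qed.

Lemma power_perfect_content_ge (E : C -> Prop) (alpha : R) :
  1 < alpha -> condU1 alpha E ->
  exists (A Cc r0 gamma : R) (g : R -> R),
    0 < A /\ 0 < Cc /\ 0 < r0 /\ 0 < gamma /\ gauge g /\
    (forall t, 0 < t < 2 * r0 -> g t = Rpower (ln (1 / (Cc * t))) (- gamma)) /\
    (forall a r, E a -> 0 < r < r0 ->
       Rbar_le (Finite (A * g (2 * r)))
               (hausdorff_content g (fun z => E z /\ cdisc a r z))).
Proof.
  intros Halpha [c [R0 [Hc [HR0 HUP]]]].
  set (gamma := ln 2 / ln alpha).
  assert (Hgamma : 0 < gamma).
  { apply Rdiv_lt_0_compat; [apply ln_2_pos |]. rewrite <- ln_1. apply ln_increasing; lra. }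
  set (kappa := ln 4 - ln c + alpha * ln 2).
  set (K := Rmax 0 kappa / (alpha - 1)).
  assert (HK : 0 <= K) by (apply Rdiv_le_0_compat; [apply Rmax_l | lra]).
  assert (Hkappa : kappa <= (alpha - 1) * K).
  { unfold K. replace ((alpha - 1) * (Rmax 0 kappa / (alpha - 1))) with (Rmax 0 kappa)
      by (field; lra). apply Rmax_r. }
  set (r0 := Rmin (Rmin R0 (1 / 4)) (exp (- (K + 2 * ln 2)))).
  destruct (Rmin3_pos R0 (1 / 4) (exp (- (K + 2 * ln 2))) HR0 ltac:(lra) (exp_pos _))
    as [Hr0 [Hr0R0 [Hr0_4 Hr0K]]].
  fold r0 in Hr0, Hr0R0, Hr0_4, Hr0K.
  set (g := fun t => Rpower (ln (1 / Rmin t (2 * r0))) (- gamma)).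
  assert (Hg : gauge g) by (apply log_gauge; lra).
  exists (exp (- gamma * ln 2) / 2), 1, r0, gamma, g.
  split; [pose proof (exp_pos (- gamma * ln 2)); lra |].
  do 4 (split; [auto; lra |]).
  split; [intros t Ht; unfold g; rewrite Rmin_left, Rmult_1_l by lra; reflexivity |].
  intros a r Ea Hr.
  apply (power_perfect_content_ge_at E g alpha c R0 K r a); auto; try lra.
  intros t Ht. unfold g. rewrite Rmin_left by lra. reflexivity.
Qed.

Lemma h1_le_compat (alpha r s : R) : 0 < alpha -> 0 <= r -> r <= s -> h1 alpha r <= h1 alpha s.
Proof.
  intros Halpha Hr Hrs. unfold h1.
  destruct (Rle_dec r 0); destruct (Rle_dec s 0); try lra.
  - unfold Rpower. pose proof (exp_pos (alpha * ln s)). lra.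
  - apply Rle_Rpower_l; lra.
Qed.

Lemma h1_le_id (alpha r : R) : 1 <= alpha -> 0 <= r < 1 -> h1 alpha r <= r.
Proof.
  intros Halpha Hr. unfold h1. destruct Rle_dec; [lra |].
  unfold Rpower. rewrite <- (exp_ln r) at 2 by lra. apply exp_le_compat.
  pose proof (ln_lt_0 r ltac:(lra)). nra.
Qed.

(* For [r] small, [ln (1 / (Cc r^alpha))] exceeds [ln (1 / (2 Cc r))] by the factor
   [alpha / 4], and [(alpha / 4)^gamma > 1 / A] by the choice of [alpha]. *)
Lemma log_gauge_power_drop (A Cc gamma alpha r : R) :
  0 < A -> 0 < gamma -> 1 <= alpha -> 2 * ln 2 + 1 + Rabs (ln A) / gamma <= ln alpha ->
  0 < r -> 2 * Rabs (ln Cc) + 2 < - ln r -> 0 < Cc ->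
  Rpower (ln (1 / (Cc * Rpower r alpha))) (- gamma)
    < A * Rpower (ln (1 / (Cc * (2 * r)))) (- gamma).
Proof.
  intros HA Hgamma Halpha Hs Hr HL HCc.
  pose proof ln_2_pos. pose proof ln_2_lt_1.
  set (L := - ln r) in *. set (m := ln Cc) in *.
  pose proof (Rle_abs m). pose proof (Rle_abs (- m)). rewrite Rabs_Ropp in H2.
  assert (Hfar : ln (1 / (Cc * Rpower r alpha)) = alpha * L - m).
  { unfold Rpower, Rdiv. rewrite Rmult_1_l, ln_Rinv, ln_mult, ln_exp by
      (pose proof (exp_pos (alpha * ln r)); try apply Rmult_lt_0_compat; lra).
    unfold L, m. ring. }
  assert (Hnear : ln (1 / (Cc * (2 * r))) = L - m - ln 2).
  { unfold Rdiv. rewrite Rmult_1_l, ln_Rinv, !ln_mult by (try apply Rmult_lt_0_compat; lra).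
    unfold L, m. ring. }
  rewrite Hfar, Hnear. unfold Rpower. rewrite <- (exp_ln A) at 1 by exact HA.
  rewrite <- exp_plus. apply exp_increasing.
  assert (Hnum : ln alpha + ln L - ln 2 <= ln (alpha * L - m)).
  { rewrite <- ln_mult, <- ln_div by nra. apply ln_le; [nra |].
    apply (Rmult_le_reg_r 2); [lra |]. unfold Rdiv. rewrite Rmult_assoc, Rinv_l by lra. nra. }
  assert (Hden : ln (L - m - ln 2) <= ln 2 + ln L).
  { rewrite <- ln_mult by lra. apply ln_le; lra. }
  assert (Hgap : - ln A < gamma * (ln alpha - 2 * ln 2)).
  { apply (Rmult_le_compat_l gamma) in Hs; [| lra].
    replace (gamma * (2 * ln 2 + 1 + Rabs (ln A) / gamma))
      with (gamma * (2 * ln 2) + gamma + Rabs (ln A)) in Hs by (field; lra).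
    pose proof (Rle_abs (- ln A)). rewrite Rabs_Ropp in H3. lra. }
  nra.
Qed.

Lemma power_perfect_of_content_ge (E : C -> Prop) (A Cc r0 gamma : R) (g : R -> R) :
  closed E -> 0 < A -> 0 < Cc -> 0 < r0 -> 0 < gamma -> gauge g ->
  (forall t, 0 < t < 2 * r0 -> g t = Rpower (ln (1 / (Cc * t))) (- gamma)) ->
  (forall a r, E a -> 0 < r < r0 ->
     Rbar_le (Finite (A * g (2 * r))) (hausdorff_content g (fun z => E z /\ cdisc a r z))) ->
  exists alpha, 1 < alpha /\ condU1 alpha E.
Proof.
  intros HE HA HCc Hr0 Hgamma Hg Hform Hlb.
  set (alpha := exp (2 * ln 2 + 1 + Rabs (ln A) / gamma)).
  assert (Halpha : 1 < alpha).
  { pose proof ln_2_pos. pose proof (Rabs_pos (ln A)).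
    assert (0 <= Rabs (ln A) / gamma) by (apply Rdiv_le_0_compat; lra).
    pose proof (exp_ineq1 (2 * ln 2 + 1 + Rabs (ln A) / gamma) ltac:(lra)). unfold alpha. lra. }
  assert (Hln_alpha : ln alpha = 2 * ln 2 + 1 + Rabs (ln A) / gamma) by apply ln_exp.
  set (M := 2 * Rabs (ln Cc) + 2).
  set (R0 := Rmin (Rmin r0 (1 / 2)) (exp (- M))).
  destruct (Rmin3_pos r0 (1 / 2) (exp (- M)) Hr0 ltac:(lra) (exp_pos _))
    as [HR0 [HR0r0 [HR0_2 HR0M]]].
  fold R0 in HR0, HR0r0, HR0_2, HR0M.
  exists alpha. split; [exact Halpha |].
  exists (1 / 2), R0. split; [lra | split; [exact HR0 |]].
  apply (uniformly_perfect_of_content_ge E (h1 alpha) g R0 A HE Hg).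
  - intros r s Hr Hrs _. apply h1_le_compat; lra.
  - intros r Hr. apply h1_le_id; lra.
  - intros r Hr. rewrite h1_pos_eq by lra. apply exp_pos.
  - intros r Hr.
    assert (Hpow : 0 < h1 alpha r <= r) by (split; [rewrite h1_pos_eq by lra; apply exp_pos |
                                                   apply h1_le_id; lra]).
    rewrite !Hform by lra. rewrite h1_pos_eq by lra.
    apply log_gauge_power_drop; try lra.
    apply (lt_opp_ln M). split; lra.
  - intros a r Ea Hr. apply Hlb; [exact Ea | lra].
Qed.

(* [g_{2,eta} t = exp (- eta * psi (ln (2 / t)))], since [ln (4/t) = ln (2/t) + ln 2]. *)
Definition psi (u : R) : R := u / ln (u + ln 2).

Lemma psi_ln_div (t : R) : 0 < t -> ln (2 / t) / ln (ln (4 / t)) = psi (ln (2 / t)).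
Proof.
  intro Ht. unfold psi. replace (4 / t) with (2 * (2 / t)) by (field; lra).
  rewrite ln_mult by (apply Rdiv_lt_0_compat || idtac; lra). f_equal. f_equal. ring.
Qed.

Lemma ln_sub_ln_le (p q : R) : 0 < p -> 0 < q -> ln q - ln p <= (q - p) / p.
Proof.
  intros Hp Hq. rewrite <- ln_div by lra.
  replace ((q - p) / p) with (q / p - 1) by (field; lra).
  apply ln_le_sub_1, Rdiv_lt_0_compat; lra.
Qed.

Lemma Rdiv_le_cross (u v a b : R) : 0 < a -> 0 < b -> u * b <= v * a -> u / a <= v / b.
Proof.
  intros Ha Hb H.
  replace (u / a) with (u * b * / (a * b)) by (field; lra).
  replace (v / b) with (v * a * / (a * b)) by (field; lra).
  apply Rmult_le_compat_r; [left; apply Rinv_0_lt_compat; nra | exact H].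
Qed.

Lemma psi_le_compat (u v : R) : 0 <= u -> u <= v -> 1 <= ln (u + ln 2) -> psi u <= psi v.
Proof.
  intros Hu Huv Hl. unfold psi. pose proof ln_2_pos.
  assert (Hlv : ln (u + ln 2) <= ln (v + ln 2)) by (apply ln_le; lra).
  pose proof (ln_sub_ln_le (u + ln 2) (v + ln 2) ltac:(lra) ltac:(lra)) as Hgap.
  apply Rdiv_le_cross; try lra.
  assert (Hfrac : 0 <= u / (u + ln 2) <= 1).
  { split; [apply Rdiv_le_0_compat; lra |].
    apply (Rmult_le_reg_r (u + ln 2)); [lra |].
    unfold Rdiv. rewrite Rmult_assoc, Rinv_l by lra. lra. }
  replace ((v + ln 2 - (u + ln 2)) / (u + ln 2)) with ((v - u) / (u + ln 2)) in Hgap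
    by (field; lra).
  assert (u * ((v - u) / (u + ln 2)) <= v - u).
  { replace (u * ((v - u) / (u + ln 2))) with ((v - u) * (u / (u + ln 2))) by (field; lra).
    nra. }
  nra.
Qed.

Lemma psi_step (x kappa beta : R) :
  0 <= x -> 0 < beta -> 1 <= ln (x + ln 2) -> Rabs kappa <= beta * ln (x + ln 2) ->
  psi (x + (kappa + beta * ln (x + ln 2))) <= psi x + 2 * beta.
Proof.
  intros Hx Hbeta Hl Hkappa. unfold psi. pose proof ln_2_pos.
  pose proof (Rle_abs kappa). pose proof (Rle_abs (- kappa)). rewrite Rabs_Ropp in H1.
  set (l := ln (x + ln 2)) in *. set (d := kappa + beta * l).
  assert (Hl' : l <= ln (x + d + ln 2)) by (apply ln_le; unfold d; lra).
  assert ((x + d) / ln (x + d + ln 2) <= (x + d) / l) by (apply Rdiv_le_cross; unfold d in *; nra).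
  assert ((x + d) / l = x / l + kappa / l + beta) by (unfold d; field; lra).
  assert (kappa / l <= beta).
  { apply (Rmult_le_reg_r l); [lra |]. unfold Rdiv. rewrite Rmult_assoc, Rinv_l by lra. lra. }
  lra.
Qed.

Lemma exp_2_le_9 : exp 2 <= 9.
Proof.
  replace 2 with (1 + 1) by ring. rewrite exp_plus.
  pose proof exp_le_3. pose proof (exp_pos 1). nra.
Qed.

Lemma mul_ln_le (beta L : R) : 0 < beta -> 1 <= L -> 4 * beta ^ 2 <= L -> beta * ln L <= L.
Proof.
  intros Hbeta HL H4.
  assert (Hs : 0 < sqrt L) by (apply sqrt_lt_R0; lra).
  assert (HsL : sqrt L * sqrt L = L) by (apply sqrt_sqrt; lra).
  assert (Hln : ln L = 2 * ln (sqrt L)) by (rewrite <- HsL at 1; rewrite ln_mult by lra; ring).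
  pose proof (ln_le_sub_1 (sqrt L) Hs).
  assert (2 * beta <= sqrt L).
  { rewrite <- (sqrt_square (2 * beta)) by lra. apply sqrt_le_1_alt. nra. }
  rewrite Hln. nra.
Qed.

(* Dividing by [h_{2,beta} r] adds [beta ln L] to [L = ln (1/r)], which raises [psi] by a
   definite amount because [ln (L + beta ln L)] is only [ln L + O(beta ln L / L)]. *)
Lemma psi_jump (L beta : R) :
  0 < beta -> 9 <= L -> beta * ln L <= L ->
  psi L + beta / 8 <= psi (L + (ln 2 + beta * ln L)).
Proof.
  intros Hbeta HL HbL. unfold psi. pose proof ln_2_pos. pose proof ln_2_lt_1.
  set (c := ln 2) in *. set (d := c + beta * ln L).
  assert (HlnL : c <= ln L) by (apply ln_le; lra).
  assert (Hd : 0 <= d) by (unfold d; nra).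
  set (l := ln (L + c)).
  assert (Hl2 : 2 <= l).
  { unfold l. rewrite <- (ln_exp 2). apply ln_le; [apply exp_pos |].
    pose proof exp_2_le_9. lra. }
  assert (HlL : l <= 2 * ln L).
  { assert (ln (L + c) <= ln (L * L)) by (apply ln_le; nra).
    rewrite ln_mult in H1 by lra. unfold l. lra. }
  set (e := d / (L + c)).
  assert (He : 0 <= e <= 1).
  { split; [apply Rdiv_le_0_compat; lra |].
    apply (Rmult_le_reg_r (L + c)); [lra |]. unfold e, Rdiv.
    rewrite Rmult_assoc, Rinv_l by lra. unfold d. lra. }
  assert (HLe : L * e <= d).
  { unfold e. replace (L * (d / (L + c))) with (d - c * (d / (L + c))) by (field; lra).
    assert (0 <= d / (L + c)) by (apply Rdiv_le_0_compat; lra). nra. }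
  assert (Hnext : ln (L + d + c) <= l + e).
  { pose proof (ln_sub_ln_le (L + c) (L + d + c) ltac:(lra) ltac:(lra)).
    replace (L + d + c - (L + c)) with d in H1 by ring. unfold e, l. lra. }
  assert (Hnext_pos : l <= ln (L + d + c)) by (apply ln_le; lra).
  assert ((L + d) / (l + e) <= (L + d) / ln (L + d + c)) by (apply Rdiv_le_cross; nra).
  assert (L / l + beta / 8 <= (L + d) / (l + e)).
  { assert (Hbl : beta * l <= 2 * d) by (unfold d; nra).
    assert ((L + d) / (l + e) - (L / l + beta / 8) =
            ((L + d) * 8 * l - 8 * L * (l + e) - beta * l * (l + e)) / (8 * l * (l + e)))
      by (field; lra).
    assert (0 <= ((L + d) * 8 * l - 8 * L * (l + e) - beta * l * (l + e)) / (8 * l * (l + e)))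
      by (apply Rdiv_le_0_compat; nra).
    lra. }
  replace (L + (c + beta * ln L) + c) with (L + d + c) by (unfold d; ring).
  fold d. lra.
Qed.

Lemma psi_square_ge (s : R) : 2 <= s -> s / 2 <= psi (s ^ 2 - ln 2).
Proof.
  intro Hs. unfold psi. pose proof ln_2_pos.
  replace (s ^ 2 - ln 2 + ln 2) with (s * s) by ring.
  rewrite ln_mult by lra.
  assert (0 < ln s) by (rewrite <- ln_1; apply ln_increasing; lra).
  assert (s * ln s <= s * (s - 1)) by (apply Rmult_le_compat_l; [lra | apply ln_le_sub_1; lra]).
  apply Rdiv_le_cross; [lra | lra |]. pose proof ln_2_lt_1. simpl. nra.
Qed.

Lemma loglog_gauge (eta T : R) :
  0 < eta -> 0 < T -> exp 1 <= ln (2 / T) ->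
  gauge (fun t => exp (- eta * (ln (2 / Rmin t T) / ln (ln (4 / Rmin t T))))).
Proof.
  intros Heta HT HlnT. pose proof ln_2_pos. pose proof (exp_pos 1).
  assert (Hln2 : forall t, 0 < t -> ln (2 / t) = ln 2 - ln t) by (intros; apply ln_div; lra).
  apply (gauge_truncate (fun t => exp (- eta * (ln (2 / t) / ln (ln (4 / t)))))); [lra | | |].
  - intros t Ht. apply exp_pos.
  - intros s t Hs Hst HtT. rewrite !psi_ln_div by lra. apply exp_le_compat.
    assert (ln t <= ln T) by (apply ln_le; lra).
    assert (ln s <= ln t) by (apply ln_le; lra).
    assert (Hle : psi (ln (2 / t)) <= psi (ln (2 / s))).
    { rewrite !Hln2 in * by lra. apply psi_le_compat; try lra.
      rewrite <- (ln_exp 1) at 1. apply ln_le; [apply exp_pos | lra]. }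
    nra.
  - intros eps Heps.
    set (s := Rmax 2 (Rmax (ln (2 / T) + 2) (2 * (- ln eps) / eta + 1))).
    assert (Hs2 : 2 <= s) by apply Rmax_l.
    assert (HsT : ln (2 / T) + 2 <= s) by (eapply Rle_trans; [apply Rmax_l | apply Rmax_r]).
    assert (Hseps : 2 * (- ln eps) / eta + 1 <= s) by (eapply Rle_trans; [apply Rmax_r | apply Rmax_r]).
    set (u := s ^ 2 - ln 2).
    assert (Hu : s <= u) by (unfold u; pose proof ln_2_lt_1; nra).
    pose proof (exp_pos (- u)).
    exists (2 * exp (- u)).
    assert (Hlnu : ln (2 / (2 * exp (- u))) = u).
    { replace (2 / (2 * exp (- u))) with (/ exp (- u)) by (field; lra).
      rewrite ln_Rinv, ln_exp by lra. ring. }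
    split; [split |].
    + lra.
    + rewrite Hln2 in HsT by lra.
      assert (exp (- u) <= exp (ln (T / 2))) by (apply exp_le_compat; rewrite ln_div; lra).
      rewrite exp_ln in H2 by lra. lra.
    + rewrite psi_ln_div, Hlnu by lra.
      pose proof (psi_square_ge s Hs2). fold u in H2.
      rewrite <- (exp_ln eps) by exact Heps. apply exp_increasing.
      apply (Rmult_le_compat_l eta) in Hseps; [| lra].
      replace (eta * (2 * - ln eps / eta + 1)) with (2 * - ln eps + eta) in Hseps by (field; lra).
      nra.
Qed.

Lemma h2_pos_eq (beta r : R) : 0 < r -> h2 beta r = r * Rpower (ln (1 / r)) (- beta).
Proof. intro Hr. unfold h2. destruct Rle_dec; [lra | reflexivity]. Qed.

Lemma loglog_step_ln (c beta x : R) :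
  0 < c -> 0 < x ->
  - ln (c * h2 beta (x / 2) / 4)
    = - ln x + ((ln 2 + ln 4 - ln c) + beta * ln (- ln x + ln 2)).
Proof.
  intros Hc Hx. rewrite h2_pos_eq by lra. unfold Rpower.
  replace (1 / (x / 2)) with (2 / x) by (field; lra).
  pose proof (exp_pos (- beta * ln (ln (2 / x)))).
  set (p := exp (- beta * ln (ln (2 / x)))) in *.
  assert (0 < x / 2 * p) by (apply Rmult_lt_0_compat; lra).
  assert (0 < c * (x / 2 * p)) by (apply Rmult_lt_0_compat; lra).
  rewrite ln_div, ln_mult, ln_mult, (ln_div x 2) by lra.
  unfold p. rewrite ln_exp, (ln_div 2 x) by lra. replace (- ln x + ln 2) with (ln 2 - ln x) by ring. ring.
Qed.

Lemma loglog_growth_psi (beta kappa : R) (x : nat -> R) :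
  0 < beta -> 0 <= x 0%nat -> 1 <= ln (x 0%nat + ln 2) ->
  Rabs kappa <= beta * ln (x 0%nat + ln 2) ->
  (forall n, x (S n) = x n + (kappa + beta * ln (x n + ln 2))) ->
  forall n, x 0%nat <= x n /\ psi (x n) <= psi (x 0%nat) + 2 * beta * INR n.
Proof.
  intros Hbeta Hx0 Hl0 Hkappa Hrec. pose proof ln_2_pos.
  induction n as [|n [Hxn Hpsi]]; [simpl; lra |].
  assert (Hl : ln (x 0%nat + ln 2) <= ln (x n + ln 2)) by (apply ln_le; lra).
  pose proof (Rle_abs (- kappa)). rewrite Rabs_Ropp in H0.
  rewrite Hrec, S_INR. split; [nra |].
  pose proof (psi_step (x n) kappa beta ltac:(lra) Hbeta ltac:(lra) ltac:(nra)). lra.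
Qed.

Lemma loglog_radii_gauge_bound (c beta r : R) (n : nat) :
  0 < beta -> 0 < c -> r < 1 ->
  (forall m, 0 < perfect_radii (fun s => c * h2 beta s) r m) ->
  1 <= ln (- ln r + ln 2) -> Rabs (ln 2 + ln 4 - ln c) <= beta * ln (- ln r + ln 2) ->
  exp (- (ln 2 / (2 * beta) * psi (- ln r))) / 2 / 2 ^ n
    <= exp (- (ln 2 / (2 * beta)) *
            (ln (2 / (2 * perfect_radii (fun s => c * h2 beta s) r (S n))) /
             ln (ln (4 / (2 * perfect_radii (fun s => c * h2 beta s) r (S n)))))).
Proof.
  intros Hbeta Hc Hr1 Hrs Hl0 Hkappa.
  set (rs := perfect_radii (fun s => c * h2 beta s) r) in *.
  pose proof (Hrs 0%nat) as Hr. change (rs 0%nat) with r in Hr.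
  pose proof ln_2_pos. pose proof (ln_lt_0 r ltac:(lra)).
  destruct (loglog_growth_psi beta _ (fun m => - ln (rs m)) Hbeta ltac:(change (0 <= - ln r); lra) Hl0 Hkappa
              (fun m => loglog_step_ln c beta (rs m) Hc (Hrs m)) (S n)) as [_ Hpsi].
  change (rs 0%nat) with r in Hpsi.
  rewrite exp_div_pow2, psi_ln_div by (pose proof (Hrs (S n)); lra).
  replace (2 / (2 * rs (S n))) with (/ rs (S n)) by (pose proof (Hrs (S n)); field; lra).
  rewrite ln_Rinv by apply Hrs.
  apply exp_le_compat.
  assert (Heta : 0 < ln 2 / (2 * beta)) by (apply Rdiv_lt_0_compat; lra).
  apply (Rmult_le_compat_l (ln 2 / (2 * beta))) in Hpsi; [| lra].
  replace (ln 2 / (2 * beta) * (psi (- ln r) + 2 * beta * INR (S n)))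
    with (ln 2 / (2 * beta) * psi (- ln r) + INR (S n) * ln 2) in Hpsi by (field; lra).
  lra.
Qed.

Lemma loglog_perfect_content_ge_at (E : C -> Prop) (g : R -> R) (beta c R0 Xl r : R) (a : C) :
  0 < beta -> 0 < c -> uniformly_perfect (fun s => c * h2 beta s) R0 E ->
  1 <= Xl -> Rabs (ln 2 + ln 4 - ln c) <= beta * Xl ->
  gauge g ->
  (forall t, 0 < t <= 2 * r ->
     g t = exp (- (ln 2 / (2 * beta)) * (ln (2 / t) / ln (ln (4 / t))))) ->
  E a -> 0 < r < R0 -> r < 1 -> exp Xl <= - ln r ->
  Rbar_le (1 / 2 * g (2 * r)) (hausdorff_content g (fun z => E z /\ cdisc a r z)).
Proof.
  intros Hbeta Hc HUP HXl Hkappa Hg Hform Ea Hr Hr1 HXr. pose proof ln_2_pos.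
  assert (Hlarge : Xl <= ln (- ln r + ln 2)).
  { rewrite <- (ln_exp Xl) at 1. apply ln_le; [apply exp_pos | lra]. }
  set (h := fun s => c * h2 beta s).
  assert (h_pos : forall s, 0 < s < R0 -> 0 < h s).
  { intros s Hs. unfold h. rewrite h2_pos_eq by lra. unfold Rpower.
    pose proof (exp_pos (- beta * ln (ln (1 / s)))). apply Rmult_lt_0_compat; nra. }
  pose proof HUP as [_ [_ [h_le _]]].
  pose proof (perfect_radii_bounds h R0 r h_le h_pos Hr) as Hrs.
  apply (uniformly_perfect_content_ge E h g R0 _ r a HUP h_pos); try apply Hg; auto.
  intro n. pose proof (Hrs (S n)). rewrite !Hform by lra.
  replace (1 / 2 * exp (- (ln 2 / (2 * beta)) * (ln (2 / (2 * r)) / ln (ln (4 / (2 * r))))))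
    with (exp (- (ln 2 / (2 * beta) * psi (- ln r))) / 2).
  - apply loglog_radii_gauge_bound; try lra; [intro m; apply (Hrs m) | nra].
  - rewrite psi_ln_div by lra. replace (2 / (2 * r)) with (/ r) by (field; lra).
    rewrite ln_Rinv by lra. rewrite Ropp_mult_distr_l. field.
Qed.

Lemma loglog_perfect_content_ge (E : C -> Prop) (beta : R) :
  0 < beta -> condU2 beta E ->
  exists (A r0 eta : R) (g : R -> R),
    0 < A /\ 0 < r0 /\ 0 < eta /\ gauge g /\
    (forall t, 0 < t < 2 * r0 -> g t = exp (- eta * (ln (2 / t) / ln (ln (4 / t))))) /\
    (forall a r, E a -> 0 < r < r0 ->
       Rbar_le (Finite (A * g (2 * r)))
               (hausdorff_content g (fun z => E z /\ cdisc a r z))).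
Proof.
  intros Hbeta [c [R0 [Hc [HR0 HUP]]]]. pose proof ln_2_pos.
  set (eta := ln 2 / (2 * beta)).
  assert (Heta : 0 < eta) by (apply Rdiv_lt_0_compat; lra).
  set (kappa := ln 2 + ln 4 - ln c).
  set (Xl := Rmax 1 (Rabs kappa / beta)).
  assert (HXl : 1 <= Xl) by apply Rmax_l.
  assert (Hkappa : Rabs kappa <= beta * Xl).
  { pose proof (Rmax_r 1 (Rabs kappa / beta)). fold Xl in H0.
    apply (Rmult_le_compat_l beta) in H0; [| lra].
    replace (beta * (Rabs kappa / beta)) with (Rabs kappa) in H0 by (field; lra). lra. }
  set (r0 := Rmin (Rmin R0 (1 / 4)) (exp (- exp Xl))).
  destruct (Rmin3_pos R0 (1 / 4) (exp (- exp Xl)) HR0 ltac:(lra) (exp_pos _))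
    as [Hr0 [Hr0R0 [Hr0_4 Hr0X]]].
  fold r0 in Hr0, Hr0R0, Hr0_4, Hr0X.
  set (g := fun t => exp (- eta * (ln (2 / Rmin t (2 * r0)) / ln (ln (4 / Rmin t (2 * r0)))))).
  assert (Hg : gauge g).
  { apply loglog_gauge; [exact Heta | lra |].
    replace (2 / (2 * r0)) with (/ r0) by (field; lra). rewrite ln_Rinv by lra.
    assert (ln r0 <= ln (exp (- exp Xl))) by (apply ln_le; lra).
    rewrite ln_exp in H0. pose proof (exp_le_compat 1 Xl HXl). lra. }
  exists (1 / 2), r0, eta, g.
  do 3 (split; [lra |]). split; [exact Hg |].
  split; [intros t Ht; unfold g; rewrite Rmin_left by lra; reflexivity |].
  intros a r Ea Hr.
  apply (loglog_perfect_content_ge_at E g beta c R0 Xl r a); auto; try lra.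
  - intros t Ht. unfold g. rewrite Rmin_left by lra. reflexivity.
  - pose proof (lt_opp_ln (exp Xl) r ltac:(lra)). lra.
Qed.

Lemma h2_exp_eq (beta r : R) : 0 < r < 1 -> h2 beta r = r * exp (- beta * ln (- ln r)).
Proof. intro Hr. rewrite h2_pos_eq, Rpower_ln_inv by lra. reflexivity. Qed.

Lemma h2_le_compat (beta M r s : R) :
  0 < beta -> 1 <= M -> 0 <= r -> r <= s -> s < exp (- M) -> h2 beta r <= h2 beta s.
Proof.
  intros Hbeta HM Hr Hrs Hs.
  assert (Hs1 : s < 1) by (pose proof (exp_increasing (- M) 0 ltac:(lra)); rewrite exp_0 in H; lra).
  destruct (Rle_lt_or_eq_dec 0 r Hr) as [Hr0 | <-].
  - assert (HlnS : M < - ln s) by (apply lt_opp_ln; split; lra).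
    rewrite !h2_exp_eq by (split; lra). apply Rmult_le_compat; try lra; try (left; apply exp_pos).
    apply exp_le_compat.
    assert (ln r <= ln s) by (apply ln_le; lra).
    assert (ln (- ln s) <= ln (- ln r)) by (apply ln_le; lra).
    nra.
  - unfold h2 at 1. destruct Rle_dec; [| lra].
    destruct (Rle_lt_or_eq_dec 0 s ltac:(lra)) as [Hs0 | <-].
    + rewrite h2_exp_eq by (split; lra). pose proof (exp_pos (- beta * ln (- ln s))). nra.
    + unfold h2. destruct Rle_dec; lra.
Qed.

Lemma h2_le_id (beta M r : R) : 0 < beta -> 1 <= M -> 0 <= r < exp (- M) -> h2 beta r <= r.
Proof.
  intros Hbeta HM Hr.
  assert (Hr1 : r < 1) by (pose proof (exp_increasing (- M) 0 ltac:(lra)); rewrite exp_0 in H; lra).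
  destruct (Rle_lt_or_eq_dec 0 r (proj1 Hr)) as [Hr0 | <-].
  - rewrite h2_exp_eq by (split; lra).
    assert (HlnR : M < - ln r) by (apply lt_opp_ln; split; lra).
    assert (exp (- beta * ln (- ln r)) <= 1).
    { rewrite <- exp_0. apply exp_le_compat.
      assert (0 <= ln (- ln r)) by (rewrite <- ln_1; apply ln_le; lra). nra. }
    pose proof (exp_pos (- beta * ln (- ln r))). nra.
  - unfold h2. destruct Rle_dec; lra.
Qed.

(* [ln (2 / h2 r) = L + (ln 2 + beta ln L)] with [L = ln (1/r)], so [psi] jumps by
   [beta / 8], which beats [ln (1/A) / eta]. *)
Lemma loglog_gauge_drop (A eta beta r : R) :
  0 < A -> 0 < eta -> 0 < beta -> Rabs (ln A) < eta * beta / 8 ->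
  0 < r -> 9 + 4 * beta ^ 2 <= - ln r ->
  exp (- eta * psi (ln (2 / h2 beta r))) < A * exp (- eta * psi (ln (2 / (2 * r)))).
Proof.
  intros HA Heta Hbeta HlnA Hr HL. pose proof ln_2_pos.
  set (L := - ln r) in *.
  assert (Hr1 : r < 1).
  { apply Rnot_le_lt. intro Hr1. pose proof (ln_le 1 r ltac:(lra) Hr1).
    rewrite ln_1 in H0. unfold L in HL. nra. }
  pose proof (exp_pos (- beta * ln L)).
  assert (Hfar : ln (2 / h2 beta r) = L + (ln 2 + beta * ln L)).
  { rewrite h2_exp_eq by (split; lra). fold L.
    rewrite ln_div, ln_mult, ln_exp by (try apply Rmult_lt_0_compat; lra). unfold L. ring. }
  assert (Hnear : ln (2 / (2 * r)) = L).
  { replace (2 / (2 * r)) with (/ r) by (field; lra). rewrite ln_Rinv by lra. reflexivity. }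
  rewrite Hfar, Hnear.
  pose proof (psi_jump L beta Hbeta ltac:(nra) (mul_ln_le beta L Hbeta ltac:(nra) ltac:(lra))).
  rewrite <- (exp_ln A) at 1 by exact HA. rewrite <- exp_plus. apply exp_increasing.
  pose proof (Rle_abs (- ln A)). rewrite Rabs_Ropp in H2.
  assert (eta * (psi L + beta / 8) <= eta * psi (L + (ln 2 + beta * ln L)))
    by (apply Rmult_le_compat_l; lra).
  lra.
Qed.

Lemma loglog_perfect_of_content_ge (E : C -> Prop) (A r0 eta : R) (g : R -> R) :
  closed E -> 0 < A -> 0 < r0 -> 0 < eta -> gauge g ->
  (forall t, 0 < t < 2 * r0 -> g t = exp (- eta * (ln (2 / t) / ln (ln (4 / t))))) ->
  (forall a r, E a -> 0 < r < r0 ->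
     Rbar_le (Finite (A * g (2 * r))) (hausdorff_content g (fun z => E z /\ cdisc a r z))) ->
  exists beta, 0 < beta /\ condU2 beta E.
Proof.
  intros HE HA Hr0 Heta Hg Hform Hlb.
  set (beta := 8 * (Rabs (ln A) + 1) / eta).
  assert (Hbeta : 0 < beta) by (unfold beta; pose proof (Rabs_pos (ln A)); apply Rdiv_lt_0_compat; lra).
  assert (HlnA : Rabs (ln A) < eta * beta / 8) by (unfold beta; field_simplify; lra).
  set (M := 9 + 4 * beta ^ 2).
  assert (HM : 9 <= M) by (unfold M; nra).
  set (R0 := Rmin (Rmin r0 (1 / 4)) (exp (- M))).
  destruct (Rmin3_pos r0 (1 / 4) (exp (- M)) Hr0 ltac:(lra) (exp_pos _))
    as [HR0 [HR0r0 [HR0_4 HR0M]]].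
  fold R0 in HR0, HR0r0, HR0_4, HR0M.
  exists beta. split; [exact Hbeta |].
  exists (1 / 2), R0. split; [lra | split; [exact HR0 |]].
  apply (uniformly_perfect_of_content_ge E (h2 beta) g R0 A HE Hg).
  - intros r s Hr Hrs Hs. apply (h2_le_compat beta M); lra.
  - intros r Hr. apply (h2_le_id beta M); lra.
  - intros r Hr. rewrite h2_pos_eq by lra. apply Rmult_lt_0_compat; [lra | apply exp_pos].
  - intros r Hr.
    assert (Hh : 0 < h2 beta r <= r).
    { split; [rewrite h2_pos_eq by lra; apply Rmult_lt_0_compat; [lra | apply exp_pos] |].
      apply (h2_le_id beta M); lra. }
    rewrite !Hform, !psi_ln_div by lra.
    apply loglog_gauge_drop; try lra.
    pose proof (lt_opp_ln M r ltac:(split; lra)). unfold M in *. lra.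
  - intros a r Ea Hr. apply Hlb; [exact Ea | lra].
Qed.

Theorem theorem1p4 (E : C -> Prop) (HE : closed E) :
  ((exists alpha, 1 < alpha /\ condU1 alpha E) <->
   (exists (A Cc r0 gamma : R) (g : R -> R),
      0 < A /\ 0 < Cc /\ 0 < r0 /\ 0 < gamma /\ gauge g /\
      (forall t, 0 < t < 2 * r0 -> g t = Rpower (ln (1 / (Cc * t))) (- gamma)) /\
      (forall a r, E a -> 0 < r < r0 ->
         Rbar_le (Finite (A * g (2 * r)))
                 (hausdorff_content g (fun z => E z /\ cdisc a r z)))))
  /\
  ((exists beta, 0 < beta /\ condU2 beta E) <->
   (exists (A r0 eta : R) (g : R -> R),
      0 < A /\ 0 < r0 /\ 0 < eta /\ gauge g /\
      (forall t, 0 < t < 2 * r0 ->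
         g t = exp (- eta * (ln (2 / t) / ln (ln (4 / t))))) /\
      (forall a r, E a -> 0 < r < r0 ->
         Rbar_le (Finite (A * g (2 * r)))
                 (hausdorff_content g (fun z => E z /\ cdisc a r z))))).
Proof.
  split; split.
  - intros (alpha & Halpha & HU). exact (power_perfect_content_ge E alpha Halpha HU).
  - intros (A & Cc & r0 & gamma & g & HA & HCc & Hr0 & Hgamma & Hg & Hform & Hlb).
    exact (power_perfect_of_content_ge E A Cc r0 gamma g HE HA HCc Hr0 Hgamma Hg Hform Hlb).
  - intros (beta & Hbeta & HU). exact (loglog_perfect_content_ge E beta Hbeta HU).
  - intros (A & r0 & eta & g & HA & Hr0 & Heta & Hg & Hform & Hlb).
    exact (loglog_perfect_of_content_ge E A r0 eta g HE HA Hr0 Heta Hg Hform Hlb).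
Qed.
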